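(* Let $C=\mathtt{while}(\varphi)\{C_{\mathrm{body}}\}[I]$ be a $\mathsf{pGCL}$ loop with loop-free body $C_{\mathrm{body}}$, and let $f\in\mathbb{E}$. If (1) $[\varphi]\cdot\mathrm{awp}[\![C_{\mathrm{body}}]\!](I)+[\neg\varphi]\cdot f\ge I$, and (2) $C$ is dPAST, and (3) $C$ is suitable for optional stopping w.r.t. $f$, then $\mathrm{awp}[\![C]\!](f)\ge I$.
   Context: States: fix a countably infinite set of program variables with values in $\mathbb{Q}_{\ge 0}$; a state is a map $\sigma$ from variables to $\mathbb{Q}_{\ge0}$ which is $0$ for all but finitely many variables; $\mathsf{States}$ is the set of states. A predicate is a map $\varphi:\mathsf{States}\to\{\mathsf{true},\mathsf{false}\}$. Expectations: $\mathbb{E}$ is the set of maps $\mathsf{States}\to[0,\infty]$, ordered pointwise ($\le,\ge$); $+,\cdot$ pointwise with $0\cdot\infty=0$; $\sqcap,\sqcup$ pointwise min/max; $[\varphi]$ Iverson bracket; $(\varphi\to g)(\sigma)=g(\sigma)$ if $\sigma\models\varphi$, else $\infty$; $f[x/E](\sigma)=f(\sigma[x\mapsto E(\sigma)])$. Programs of $\mathsf{pGCL}$: $C ::= \mathtt{skip} \mid x:=E \mid C;C \mid \mathtt{if}\ \varphi_1\to C\ \square\ \varphi_2\to C \mid \{C\}[p]\{C\} \mid \mathtt{while}(\varphi)\{C\}[I]$, where $E:\mathsf{States}\to\mathbb{Q}_{\ge0}$, $p:\mathsf{States}\to[0,1]$, in every guarded choice $\varphi_1\vee\varphi_2$ is valid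 (when both hold the choice is nondeterministic), and every loop carries an invariant annotation $I\in\mathbb{E}$. Weakest preexpectations for $\mathcal{T}\in\{\mathrm{dwp},\mathrm{awp}\}$: $\mathcal{T}[\![\mathtt{skip}]\!](f)=f$; $\mathcal{T}[\![x:=E]\!](f)=f[x/E]$; $\mathcal{T}[\![C_1;C_2]\!](f)=\mathcal{T}[\![C_1]\!](\mathcal{T}[\![C_2]\!](f))$; $\mathrm{dwp}$ of a guarded choice: $(\varphi_1\to\mathrm{dwp}[\![C_1]\!](f))\sqcap(\varphi_2\to\mathrm{dwp}[\![C_2]\!](f))$; $\mathrm{awp}$ of a guarded choice: $[\varphi_1]\cdot\mathrm{awp}[\![C_1]\!](f)\sqcup[\varphi_2]\cdot\mathrm{awp}[\![C_2]\!](f)$; $\mathcal{T}[\![\{C_1\}[p]\{C_2\}]\!](f)=p\cdot\mathcal{T}[\![C_1]\!](f)+(1-p)\cdot\mathcal{T}[\![C_2]\!](f)$; loops: least fixpoint of $g\mapsto[\neg\varphi]\cdot f+[\varphi]\cdot\mathcal{T}[\![C']\!](g)$. $C$ is dPAST (positively demonically almost-surely terminating) if its expected runtime (in the sense of the expected-runtime calculus of Kaminski et al., resolving nondeterminism in the worst case) is finite for all initial states. A loop $\mathtt{while}(\varphi)\{C_{\mathrm{body}}\}[I]$ is suitable for optional stopping w.r.t. $f$ if (i) $I=[\varphi]\cdot I'+[\neg\varphi]\cdot f$ for some $I'\in\mathbb{E}$, (ii) $f$, $I$ and $[\varphi]\cdot\mathrm{awp}[\![C_{\mathrm{body}}]\!](I)+[\neg\varphi]\cdot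 f$ are all pointwise $<\infty$, and (iii) there is $b\in\mathbb{R}_{\ge0}$ such that for all states $\sigma$, $([\varphi]\cdot\mathrm{awp}[\![C_{\mathrm{body}}]\!](\lambda\tau.|I(\tau)-I(\sigma)|))(\sigma)\le b$. *)

From HB Require Import structures.
From mathcomp Require Import all_boot all_order all_algebra.
From mathcomp Require Import boolp classical_sets reals ereal constructive_ereal.
Set Implicit Arguments. Unset Strict Implicit. Unset Printing Implicit Defensive.
Import Order.TTheory GRing.Theory Num.Theory.
Local Open Scope ring_scope.
Local Open Scope classical_set_scope.

Record pstate := PState {
  sval_ : nat -> rat;
  sval_ge0 : forall x, 0 <= sval_ x;
  sval_fin : exists N, forall x, (N <= x)%N -> sval_ x = 0 }.

Definition qnn := {q : rat | 0 <= q}.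

Lemma upd_ge0 (s : pstate) (x : nat) (q : qnn) (y : nat) :
  0 <= (if y == x then proj1_sig q else sval_ s y).
Proof. case: (y == x); [exact: (proj2_sig q) | exact: sval_ge0]. Qed.

Lemma upd_fin (s : pstate) (x : nat) (q : qnn) :
  exists N, forall y, (N <= y)%N -> (if y == x then proj1_sig q else sval_ s y) = 0.
Proof.
case: (sval_fin s) => N HN; exists (maxn N x.+1) => y Hy.
have Hx : (y == x) = false.
  apply/negbTE; apply/negP => /eqP Hyx; move: Hy; rewrite Hyx geq_max ltnn andbF //.
rewrite Hx; apply: HN; exact: leq_trans (leq_maxl _ _) Hy.
Qed.

Definition upd (s : pstate) (x : nat) (q : qnn) : pstate :=
  PState (upd_ge0 s x q) (upd_fin s x q).

Definition pred_ := pstate -> bool.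

Section PGCL.
Context (R : realType).
Local Open Scope ereal_scope.

(* expectations: maps States -> [0, oo] (non-negativity imposed where needed) *)
Definition Exp := pstate -> \bar R.

Definition iv (b : bool) : \bar R := if b then 1 else 0.

Inductive prog :=
| Skip
| Assign of nat & (pstate -> qnn)
| Seq of prog & prog
| GChoice of pred_ & prog & pred_ & prog   (* if phi1 -> C1 [] phi2 -> C2 *)
| PChoice of prog & (pstate -> {r : R | (0 <= r <= 1)%R}) & prog  (* {C1}[p]{C2} *)
| While of pred_ & prog & Exp.             (* while(phi){C}[I] *)

Fixpoint wf (C : prog) : Prop :=
  match C with
  | Skip | Assign _ _ => True
  | Seq C1 C2 => wf C1 /\ wf C2
  | GChoice p1 C1 p2 C2 => (forall s, p1 s || p2 s) /\ wf C1 /\ wf C2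
  | PChoice C1 _ C2 => wf C1 /\ wf C2
  | While _ Cb Inv => (forall s, 0 <= Inv s) /\ wf Cb
  end.

Fixpoint loopfree (C : prog) : Prop :=
  match C with
  | Skip | Assign _ _ => True
  | Seq C1 C2 | GChoice _ C1 _ C2 | PChoice C1 _ C2 => loopfree C1 /\ loopfree C2
  | While _ _ _ => False
  end.

(* least fixpoint in the complete lattice of expectations (Knaster-Tarski):
   pointwise infimum of all pre-fixpoints *)
Definition lfp (Phi : Exp -> Exp) : Exp := fun s =>
  ereal_inf [set g s | g in [set g : Exp | (forall t, 0 <= g t) /\ (forall t, Phi g t <= g t)]].

Fixpoint awp (C : prog) (f : Exp) : Exp :=
  match C with
  | Skip => f
  | Assign x e => fun s => f (upd s x (e s))
  | Seq C1 C2 => awp C1 (awp C2 f)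
  | GChoice p1 C1 p2 C2 => fun s =>
      maxe (iv (p1 s) * awp C1 f s) (iv (p2 s) * awp C2 f s)
  | PChoice C1 p C2 => fun s =>
      (proj1_sig (p s))%:E * awp C1 f s + (1 - proj1_sig (p s))%:E * awp C2 f s
  | While phi Cb _ =>
      lfp (fun g s => iv (~~ phi s) * f s + iv (phi s) * awp Cb g s)
  end.

(* expected runtime calculus (Kaminski et al.), nondeterminism resolved in the
   worst case (maximum) *)
Fixpoint ert (C : prog) (t : Exp) : Exp :=
  match C with
  | Skip => fun s => 1 + t s
  | Assign x e => fun s => 1 + t (upd s x (e s))
  | Seq C1 C2 => ert C1 (ert C2 t)
  | GChoice p1 C1 p2 C2 => fun s =>
      1 + maxe (iv (p1 s) * ert C1 t s) (iv (p2 s) * ert C2 t s)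
  | PChoice C1 p C2 => fun s =>
      1 + ((proj1_sig (p s))%:E * ert C1 t s + (1 - proj1_sig (p s))%:E * ert C2 t s)
  | While phi Cb _ =>
      lfp (fun g s => 1 + (iv (~~ phi s) * t s + iv (phi s) * ert Cb g s))
  end.

Definition dPAST (C : prog) : Prop := forall s, ert C (fun _ => 0) s < +oo.

Definition suitable (phi : pred_) (Cb : prog) (I f : Exp) : Prop :=
  [/\ (exists I' : Exp, (forall s, 0 <= I' s) /\
          forall s, I s = iv (phi s) * I' s + iv (~~ phi s) * f s),
      (forall s, f s < +oo) /\ (forall s, I s < +oo) /\
      (forall s, iv (phi s) * awp Cb I s + iv (~~ phi s) * f s < +oo) &
      exists b : R, (0 <= b)%R /\
        forall s, iv (phi s) * awp Cb (fun t => `|I t - I s|) s <= b%:E].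

End PGCL.
Arguments Skip {R}.

From mathcomp Require Import all_boot all_order all_algebra.
From mathcomp Require Import boolp classical_sets reals ereal constructive_ereal.
From mathcomp Require Import topology normedtype sequences.

(** Resolving the nondeterminism of the loop-free body angelically for [I] turns
  one iteration of the loop into a finite substochastic kernel [P], killed
  outside the guard, with [I <= P I] on the guard.  For a prefixpoint [g] of the
  [awp] loop functional the deficit [m = (I - g)^+] satisfies [m <= P m] and
  [m <= I], hence [m <= P^n I] for every [n].  Let [u_n = P^n 1] be the
  probability of surviving [n] iterations; finite expected runtime makes
  [sum_n u_n] finite.  Comparing [I] after each step with its value at the start
  gives [P^n I (s) <= I s * u_n s + sum_(k < n) P^k a_(n-1-k) (s)], where
  [a_j t = P (|I - I t| * u_j) t] is at most [b] (bounded increments) and tends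
  to [0] with [j].  By dominated convergence the bound tends to [0], so [m = 0]:
  [I] lies below every prefixpoint, hence below their infimum, the [awp] of the
  loop.  This is the optional stopping argument, carried out on the kernel. *)

Set Implicit Arguments. Unset Strict Implicit. Unset Printing Implicit Defensive.
Import Order.TTheory GRing.Theory Num.Theory numFieldNormedType.Exports.
Local Open Scope classical_set_scope.
Local Open Scope ring_scope.

Section NonnegSeries.
Variable R : realType.
Implicit Types (w : R ^nat) (B : R).

Lemma ge0_bounded_series_cvgn w B :
  (forall k, 0 <= w k) -> (forall n, series w n <= B) -> cvgn (series w).
Proof.
move=> w_ge0 w_le; apply: nondecreasing_is_cvgn; first exact: nondecreasing_series.
by exists B => _ [n _ <-].
Qed.

Lemma cvg0_convolution (c : nat -> nat -> R) w B :
  (forall k j, 0 <= c k j <= w k) -> (forall n, series w n <= B) ->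
  (forall k, c k j @[j --> \oo] --> 0) ->
  \sum_(0 <= k < n) c k (n - k.+1)%N @[n --> \oo] --> 0.
Proof.
move=> c_bnd w_le c_cvg.
have w_ge0 k : 0 <= w k by have /andP[/le_trans] := c_bnd k 0%N; apply.
have w_cvg := ge0_bounded_series_cvgn w_ge0 w_le.
apply/cvgr0Pnorm_le => e e_gt0; have e2_gt0 : 0 < e / 2 by rewrite divr_gt0.
have [K _ tail_small] : \forall K \near \oo, limn (series w) - series w K <= e / 2.
  move/cvgrPdist_le : w_cvg => /(_ _ e2_gt0); apply: filterS => K.
  by apply: le_trans; exact: ler_norm.
have head_cvg : \sum_(0 <= k < K) c k (n - k.+1)%N @[n --> \oo] -->
                  \sum_(0 <= k < K) (0 : R).
  apply: cvg_big => [|k _]; first exact: add_continuous.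
  by rewrite -(cvg_shiftn k.+1) /=; under eq_fun do rewrite addnK; exact: c_cvg.
rewrite big1 // in head_cvg; move/cvgr0Pnorm_le : head_cvg => /(_ _ e2_gt0) head_small.
near=> n; have Kn : (K <= n)%N by near: n; exact: nbhs_infty_ge.
rewrite (big_cat_nat (leq0n K) Kn) /= [e]splitr.
apply: le_trans (ler_normD _ _) (lerD _ _); first by near: n.
rewrite ger0_norm; last by apply: sumr_ge0 => k _; have /andP[] := c_bnd k (n - k.+1)%N.
apply: le_trans (tail_small K (leqnn K)).
apply: le_trans (_ : \sum_(K <= k < n) w k <= _).
  by apply: ler_sum => k _; have /andP[] := c_bnd k (n - k.+1)%N.
rewrite -sub_series_geq // lerB //; apply: nondecreasing_cvgn_le => //.
exact: nondecreasing_series.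
Unshelve. all: by end_near. Qed.

End NonnegSeries.

Definition subdist (R : numDomainType) (T : Type) (d : seq (R * T)) :=
  all (fun x => 0 <= x.1) d && (\sum_(x <- d) x.1 <= 1).

Lemma sum_subdist (R : numDomainType) (T : Type) (V : nmodType) (d : seq (R * T))
    (F : R * T -> V) :
  subdist d -> \sum_(x <- d) F x = \sum_(x <- d | 0 <= x.1) F x.
Proof. by case/andP => /all_filterP d_eq _; symmetry; rewrite -big_filter d_eq. Qed.

Definition kmean (R : numDomainType) (T : Type) (D : T -> seq (R * T)) (h : T -> R) t :=
  \sum_(x <- D t) x.1 * h x.2.

Section SubstochasticKernel.
Variables (R : realType) (T : Type) (D : T -> seq (R * T)).
Hypothesis D_subdist : forall t, subdist (D t).
Implicit Types (h : T -> R) (t v : T).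
Local Notation P := (kmean D).

Lemma kmean_le h1 h2 t : (forall v, h1 v <= h2 v) -> P h1 t <= P h2 t.
Proof.
move=> h12; rewrite /kmean !(sum_subdist _ (D_subdist t)).
by apply: ler_sum => x x_ge0; exact: ler_wpM2l.
Qed.

Lemma kmean0 t : P (fun _ => 0) t = 0.
Proof. by rewrite /kmean big1 // => x _; rewrite mulr0. Qed.

Lemma kmean_ge0 h t : (forall v, 0 <= h v) -> 0 <= P h t.
Proof. by move=> h_ge0; rewrite -(kmean0 t); exact: kmean_le. Qed.

Lemma kmean1_le1 t : P (fun _ => 1) t <= 1.
Proof.
rewrite /kmean (eq_bigr (fun x => x.1)) => [|x _]; last by rewrite mulr1.
by case/andP: (D_subdist t).
Qed.

Lemma kmeanD h1 h2 t : P (fun v => h1 v + h2 v) t = P h1 t + P h2 t.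
Proof. by rewrite /kmean -big_split; apply: eq_bigr => x _; rewrite mulrDr. Qed.

Lemma kmeanZ c h t : P (fun v => c * h v) t = c * P h t.
Proof. by rewrite /kmean mulr_sumr; apply: eq_bigr => x _; rewrite mulrCA. Qed.

Lemma kmean_sum n (F : nat -> T -> R) t :
  P (fun v => \sum_(0 <= k < n) F k v) t = \sum_(0 <= k < n) P (F k) t.
Proof.
by rewrite /kmean; under eq_bigr do rewrite mulr_sumr; exact: exchange_big.
Qed.

Lemma kmean_cvg (F : nat -> T -> R) (l : T -> R) t :
  (forall v, F j v @[j --> \oo] --> l v) -> P (F j) t @[j --> \oo] --> P l t.
Proof.
move=> F_cvg; apply: cvg_big => [|x _]; first exact: add_continuous.
by apply: cvgMl_tmp; exact: F_cvg.
Qed.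

Local Notation surv n := (iter n P (fun _ => 1)).

Lemma iter_kmean_le n h1 h2 t :
  (forall v, h1 v <= h2 v) -> iter n P h1 t <= iter n P h2 t.
Proof. by elim: n t => [|n IH] t h12 //=; apply: kmean_le => v; exact: IH. Qed.

Lemma iter_kmean_cst n c t : iter n P (fun _ => c) t = c * surv n t.
Proof.
elim: n t => [|n IH] t /=; first by rewrite mulr1.
by rewrite -kmeanZ; congr (P _ t); apply/funext => v; exact: IH.
Qed.

Lemma iter_kmean_cvg k (F : nat -> T -> R) (l : T -> R) t :
  (forall v, F j v @[j --> \oo] --> l v) ->
  iter k P (F j) t @[j --> \oo] --> iter k P l t.
Proof. by elim: k t => [|k IH] t F_cvg //=; apply: kmean_cvg => v; exact: IH. Qed.

Lemma iter_kmean_ge0 n h t : (forall v, 0 <= h v) -> 0 <= iter n P h t.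
Proof. by move=> h_ge0; elim: n t => [|n IH] t /=; [exact: h_ge0 | exact: kmean_ge0]. Qed.

Lemma survival_ge0 n t : 0 <= surv n t.
Proof. by apply: iter_kmean_ge0 => v; exact: ler01. Qed.

Lemma survival_le1 n t : surv n t <= 1.
Proof.
elim: n t => [|n IH] t //=.
by apply: le_trans (kmean1_le1 t); apply: kmean_le.
Qed.

Variables (I E : T -> R) (b : R).
Hypothesis I_increment : forall t, P (fun v => `|I v - I t|) t <= b.
Hypotheses (E_ge0 : forall t, 0 <= E t) (E_super : forall t, 1 + P E t <= E t).

Lemma series_survival_le n t : series (fun k => surv k t) n <= E t.
Proof.
elim: n t => [|n IH] t; first by rewrite seriesEnat /= big_geq.
rewrite seriesEnat /= big_nat_recl //=; apply: le_trans (E_super t); apply: lerD => //.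
by rewrite -kmean_sum; apply: kmean_le => v; exact: IH.
Qed.

Lemma survival_cvg0 t : surv n t @[n --> \oo] --> 0.
Proof.
apply: cvg_series_cvg_0; apply: (@ge0_bounded_series_cvgn _ _ (E t)) => [k|n].
  exact: survival_ge0.
exact: series_survival_le.
Qed.

Local Notation drift j t := (P (fun v => `|I v - I t| * surv j v) t).

Lemma iter_drift_cvg0 k t : iter k P (fun v => drift j v) t @[j --> \oo] --> 0.
Proof.
rewrite -(mul0r (surv k t)) -iter_kmean_cst; apply: iter_kmean_cvg => v.
rewrite -(kmean0 v); apply: kmean_cvg => w.
by rewrite -(mulr0 `|I w - I v|); apply: cvgMl_tmp; exact: survival_cvg0.
Qed.

Lemma iter_drift_le k j t : iter k P (fun v => drift j v) t <= b * surv k t.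
Proof.
rewrite -iter_kmean_cst; apply: iter_kmean_le => v.
apply: le_trans (I_increment v); apply: kmean_le => w.
by apply: ler_piMr => //; exact: survival_le1.
Qed.

Lemma iter_kmean_decomposition n t :
  iter n P I t <=
    I t * surv n t + \sum_(0 <= k < n) iter k P (fun v => drift (n - k.+1)%N v) t.
Proof.
elim: n t => [|n IH] t; first by rewrite big_geq // mulr1 addr0.
rewrite big_nat_recl //= subn1 /= addrA.
apply: le_trans (kmean_le t IH) _; rewrite kmeanD kmean_sum.
apply: lerD; last by under eq_bigr do rewrite subSS.
rewrite -kmeanZ -kmeanD; apply: kmean_le => v; rewrite -mulrDl.
by apply: ler_wpM2r; [exact: survival_ge0 | rewrite -lerBlDl ler_norm].
Qed.

Lemma subharmonic_le0 (m : T -> R) :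
  (forall t, m t <= P m t) -> (forall t, m t <= I t) -> forall t, m t <= 0.
Proof.
move=> m_sub m_le t.
have m_le_iter n v : m v <= iter n P I v.
  elim: n v => [|n IH] v //=; apply: le_trans (m_sub v) _; exact: kmean_le.
have b_ge0 : 0 <= b by apply: le_trans (I_increment t); exact: kmean_ge0.
have bound_cvg :
    I t * surv n t + \sum_(0 <= k < n) iter k P (fun v => drift (n - k.+1)%N v) t
    @[n --> \oo] --> I t * 0 + 0.
  apply: cvgD; first by apply: cvgMl_tmp; exact: survival_cvg0.
  apply: (@cvg0_convolution _ (fun k j => iter k P (fun v => drift j v) t)
                            (fun k => b * surv k t) (b * E t)) => [k j|n|k].
  - rewrite iter_drift_le andbT; apply: iter_kmean_ge0 => v; apply: kmean_ge0 => w.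
    by apply: mulr_ge0 => //; exact: survival_ge0.
  - by rewrite seriesEnat /= -mulr_sumr; apply: ler_wpM2l => //; exact: series_survival_le.
  - exact: iter_drift_cvg0.
rewrite -(mulr0 (I t)) -(addr0 (I t * 0)).
apply: (ler_cvg_to (cvg_cst (m t)) bound_cvg); near=> n.
exact: le_trans (m_le_iter n t) (iter_kmean_decomposition n t).
Unshelve. all: by end_near. Qed.

End SubstochasticKernel.

Local Open Scope ereal_scope.

Section LoopFree.
Variable R : realType.
Implicit Types (C : prog R) (h : Exp R).

Lemma iv_ge0 b : 0 <= iv R b. Proof. by case: b. Qed.

Lemma prob_ge0 (p : {r : R | (0 <= r <= 1)%R}) : 0 <= (sval p)%:E.
Proof. by case: p => r /= /andP[]. Qed.

Lemma probC_ge0 (p : {r : R | (0 <= r <= 1)%R}) : 0 <= (1 - sval p)%:E.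
Proof. by case: p => r /= /andP[_]; rewrite lee_fin subr_ge0. Qed.

Lemma awp_ge0 C h : loopfree C -> (forall t, 0 <= h t) -> forall t, 0 <= awp C h t.
Proof.
elim: C h => [|x e|C1 IH1 C2 IH2|p1 C1 IH1 p2 C2 IH2|C1 IH1 p C2 IH2|//] h /=
  lf h_ge0 t //; case: lf => lf1 lf2.
- by apply: IH1 => // v; exact: IH2.
- by rewrite le_max; apply/orP; left; apply: mule_ge0; [exact: iv_ge0 | exact: IH1].
- by apply: adde_ge0; apply: mule_ge0;
    [exact: prob_ge0 | exact: IH1 | exact: probC_ge0 | exact: IH2].
Qed.

Lemma ert_ge0 C h : loopfree C -> (forall t, 0 <= h t) -> forall t, 0 <= ert C h t.
Proof.
elim: C h => [|x e|C1 IH1 C2 IH2|p1 C1 IH1 p2 C2 IH2|C1 IH1 p C2 IH2|//] h /=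
  lf h_ge0 t; try by apply: adde_ge0.
- by case: lf => lf1 lf2; apply: IH1 => // v; exact: IH2.
- case: lf => lf1 lf2; apply: adde_ge0 => //; rewrite le_max; apply/orP; left.
  by apply: mule_ge0; [exact: iv_ge0 | exact: IH1].
- case: lf => lf1 lf2; apply: adde_ge0 => //; apply: adde_ge0; apply: mule_ge0;
    [exact: prob_ge0 | exact: IH1 | exact: probC_ge0 | exact: IH2].
Qed.

Lemma le_ert C h1 h2 : loopfree C -> (forall t, 0 <= h1 t) ->
  (forall t, h1 t <= h2 t) -> forall t, ert C h1 t <= ert C h2 t.
Proof.
elim: C h1 h2 => [|x e|C1 IH1 C2 IH2|p1 C1 IH1 p2 C2 IH2|C1 IH1 p C2 IH2|//] h1 h2 /=
  lf h1_ge0 h12 t; rewrite ?leeD2l //; case: lf => lf1 lf2.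
- by apply: IH1 => [//|v|v]; [exact: ert_ge0 | exact: IH2].
- by apply: le_max2; apply: lee_wpmul2l; rewrite ?iv_ge0 ?IH1 ?IH2.
- by apply: leeD; apply: lee_wpmul2l; rewrite ?prob_ge0 ?probC_ge0 ?IH1 ?IH2.
Qed.

Lemma awp_le_ert C h : loopfree C -> (forall t, 0 <= h t) ->
  forall t, awp C h t <= ert C h t.
Proof.
elim: C h => [|x e|C1 IH1 C2 IH2|p1 C1 IH1 p2 C2 IH2|C1 IH1 p C2 IH2|//] h /=
  lf h_ge0 t; rewrite ?leeDr //; case: lf => lf1 lf2.
- apply: le_trans (IH1 _ lf1 (awp_ge0 lf2 h_ge0) t) _.
  exact: le_ert lf1 (awp_ge0 lf2 h_ge0) (IH2 _ lf2 h_ge0) t.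
- by apply: lee_paddl => //; apply: le_max2; apply: lee_wpmul2l; rewrite ?iv_ge0 ?IH1 ?IH2.
- by apply: lee_paddl => //; apply: leeD; apply: lee_wpmul2l;
    rewrite ?prob_ge0 ?probC_ge0 ?IH1 ?IH2.
Qed.

End LoopFree.

Section WeightedSums.
Variables (R : realType) (T : Type).
Implicit Types (d : seq (R * T)) (h : T -> \bar R) (t : T).

Definition wsum d h := \sum_(x <- d) x.1%:E * h x.2.

Lemma le_wsum d h1 h2 : subdist d -> (forall t, h1 t <= h2 t) -> wsum d h1 <= wsum d h2.
Proof.
move=> dd h12; rewrite /wsum !(sum_subdist _ dd).
by apply: lee_sum => x x_ge0; apply: lee_wpmul2l.
Qed.

Lemma wsumD d h1 h2 : (forall t, 0 <= h1 t) -> (forall t, 0 <= h2 t) ->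
  wsum d (fun t => h1 t + h2 t) = wsum d h1 + wsum d h2.
Proof.
by move=> h1_ge0 h2_ge0; rewrite /wsum -big_split; apply: eq_bigr => x _; rewrite ge0_muleDr.
Qed.

Lemma wsum_EFin d (h : T -> R) :
  wsum d (fun t => (h t)%:E) = (\sum_(x <- d) x.1 * h x.2)%:E.
Proof. by rewrite /wsum -sumEFin. Qed.

Lemma wsum_dirac t h : wsum [:: (1%R, t)] h = h t.
Proof. by rewrite /wsum big_seq1 mul1e. Qed.

Lemma dirac_subdist (t : T) : subdist [:: (1%R : R, t)].
Proof. by rewrite /subdist /= ler01 big_seq1 lexx. Qed.

Definition scalew (c : R) d := [seq (c * x.1, x.2)%R | x <- d].

Lemma sum_scalew c d : (\sum_(x <- scalew c d) x.1 = c * \sum_(x <- d) x.1)%R.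
Proof. by rewrite big_map mulr_sumr. Qed.

Lemma all_scalew c d : (0 <= c)%R -> subdist d -> all (fun x => 0 <= x.1)%R (scalew c d).
Proof. by move=> c_ge0 /andP[+ _]; rewrite all_map; apply: sub_all => x; exact: mulr_ge0. Qed.

Lemma wsum_scalew c d h : (0 <= c)%R -> subdist d -> (forall t, 0 <= h t) ->
  wsum (scalew c d) h = c%:E * wsum d h.
Proof.
move=> c_ge0 dd h_ge0; rewrite /wsum big_map !(sum_subdist _ dd) ge0_sume_distrr.
  by apply: eq_bigr => x _; rewrite EFinM muleA.
by move=> x x_ge0; apply: mule_ge0.
Qed.

Definition mixw (r : R) d1 d2 := scalew r d1 ++ scalew (1 - r) d2.

Lemma mixw_subdist r d1 d2 : (0 <= r <= 1)%R -> subdist d1 -> subdist d2 ->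
  subdist (mixw r d1 d2).
Proof.
move=> /andP[r_ge0 r_le1] d1d d2d; have r'_ge0 : (0 <= 1 - r)%R by rewrite subr_ge0.
rewrite /subdist all_cat !all_scalew //= big_cat /= !sum_scalew.
case/andP: d1d => _ s1; case/andP: d2d => _ s2.
apply: le_trans (_ : r * 1 + (1 - r) * 1 <= 1)%R; last by rewrite !mulr1 addrC subrK.
by apply: lerD; apply: ler_wpM2l.
Qed.

Lemma wsum_mixw r d1 d2 h : (0 <= r <= 1)%R -> subdist d1 -> subdist d2 ->
  (forall t, 0 <= h t) -> wsum (mixw r d1 d2) h = r%:E * wsum d1 h + (1 - r)%:E * wsum d2 h.
Proof.
move=> /andP[r_ge0 r_le1] d1d d2d h_ge0; have r'_ge0 : (0 <= 1 - r)%R by rewrite subr_ge0.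
by rewrite /wsum big_cat -!/(wsum _ _) !wsum_scalew.
Qed.

Definition bindw d (D : T -> seq (R * T)) := flatten [seq scalew x.1 (D x.2) | x <- d].

Lemma bindw_subdist d D : subdist d -> (forall t, subdist (D t)) -> subdist (bindw d D).
Proof.
move=> dd Dd; apply/andP; split.
  case/andP: dd => + _; rewrite /bindw; elim: d => //= x d IH /andP[x_ge0 d_ge0].
  by rewrite all_cat IH // andbT; apply: all_scalew.
rewrite /bindw big_flatten big_map /=; case/andP: (dd) => _; apply: le_trans.
rewrite !(sum_subdist _ dd); apply: ler_sum => x x_ge0; rewrite sum_scalew.
by apply: ler_piMr => //; case/andP: (Dd x.2).
Qed.

Lemma wsum_bindw d D h : subdist d -> (forall t, subdist (D t)) -> (forall t, 0 <= h t) ->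
  wsum (bindw d D) h = wsum d (fun t => wsum (D t) h).
Proof.
move=> dd Dd h_ge0; rewrite /wsum big_flatten big_map /= !(sum_subdist _ dd).
by apply: eq_bigr => x x_ge0; rewrite -/(wsum _ _) wsum_scalew.
Qed.

End WeightedSums.

Section Resolution.
Variable R : realType.
Implicit Types (C : prog R) (m h : Exp R) (s : pstate) (d : seq (R * pstate)).

Definition resolves C s m d := [/\ subdist d, wsum d m = awp C m s &
  forall h, (forall t, 0 <= h t) -> wsum d h <= awp C h s].

Lemma resolves_seq C1 C2 s m d D : loopfree C2 -> (forall t, 0 <= m t) ->
  resolves C1 s (awp C2 m) d -> (forall t, resolves C2 t m (D t)) ->
  resolves (Seq C1 C2) s m (bindw d D).
Proof.
move=> lf2 m_ge0 [dd d_eq d_le] D_res; have Dd t : subdist (D t) by case: (D_res t).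
split => [|/=|h h_ge0 /=]; first exact: bindw_subdist.
  by rewrite wsum_bindw // -d_eq; congr wsum; apply/funext => t; case: (D_res t).
rewrite wsum_bindw //; apply: le_trans (d_le _ (awp_ge0 lf2 h_ge0)).
by apply: le_wsum => // t; case: (D_res t) => _ _; apply.
Qed.

Lemma awp_gchoiceC (p1 p2 : pred_) C1 C2 :
  awp (GChoice p1 C1 p2 C2) = awp (GChoice p2 C2 p1 C1).
Proof. by apply/funext => h; apply/funext => s /=; rewrite maxC. Qed.

Lemma guarded_max_cases (b1 b2 : bool) (x1 x2 : \bar R) :
  b1 || b2 -> 0 <= x1 -> 0 <= x2 ->
  (b1 && (iv R b2 * x2 <= x1)) || (b2 && (iv R b1 * x1 <= x2)).
Proof.
by case: b1 b2 => [] [] //= _ x1_ge0 x2_ge0; rewrite ?mul1e ?mul0e ?x1_ge0 ?le_total.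
Qed.

Lemma resolves_gchoice (p1 p2 : pred_) C1 C2 s m d :
  p1 s -> iv R (p2 s) * awp C2 m s <= awp C1 m s ->
  resolves C1 s m d -> resolves (GChoice p1 C1 p2 C2) s m d.
Proof.
move=> p1s le21 [dd d_eq d_le]; split => //= [|h h_ge0]; rewrite p1s mul1e.
  by rewrite max_l.
by rewrite le_max d_le.
Qed.

Lemma resolves_pchoice C1 p C2 s m d1 d2 : (forall t, 0 <= m t) ->
  resolves C1 s m d1 -> resolves C2 s m d2 ->
  resolves (PChoice C1 p C2) s m (mixw (sval (p s)) d1 d2).
Proof.
move=> m_ge0 [d1d e1 le1] [d2d e2 le2]; rewrite /resolves /=.
case: (p s) => r r01 /=; have /andP[r_ge0 r_le1] := r01.
split => [|/=|h h_ge0]; first exact: mixw_subdist.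
  by rewrite wsum_mixw // e1 e2.
rewrite wsum_mixw //; apply: leeD; apply: lee_wpmul2l; rewrite ?lee_fin ?subr_ge0 //.
  exact: le1.
exact: le2.
Qed.

Lemma awp_resolution C m : loopfree C -> wf C -> (forall t, 0 <= m t) ->
  forall s, exists d, resolves C s m d.
Proof.
elim: C m => [|x e|C1 IH1 C2 IH2|p1 C1 IH1 p2 C2 IH2|C1 IH1 p C2 IH2|//] m /= lf w m_ge0 s.
- by exists [:: (1%R, s)]; split => [|/=|h _ /=]; rewrite ?wsum_dirac ?dirac_subdist.
- exists [:: (1%R, upd s x (e s))].
  by split => [|/=|h _ /=]; rewrite ?wsum_dirac ?dirac_subdist.
- case: lf w => lf1 lf2 [w1 w2].
  have [d d_res] := IH1 _ lf1 w1 (awp_ge0 lf2 m_ge0) s.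
  have [D D_res] := choice (IH2 _ lf2 w2 m_ge0).
  by exists (bindw d D); exact: resolves_seq.
- case: lf w => lf1 lf2 [p12 [w1 w2]].
  have [d1 d1_res] := IH1 _ lf1 w1 m_ge0 s; have [d2 d2_res] := IH2 _ lf2 w2 m_ge0 s.
  case/orP: (guarded_max_cases (p12 s) (awp_ge0 lf1 m_ge0 s) (awp_ge0 lf2 m_ge0 s)).
    by move=> /andP[p1s le21]; exists d1; exact: resolves_gchoice.
  move=> /andP[p2s le12]; exists d2.
  by rewrite /resolves awp_gchoiceC; exact: resolves_gchoice.
- case: lf w => lf1 lf2 [w1 w2].
  have [d1 d1_res] := IH1 _ lf1 w1 m_ge0 s; have [d2 d2_res] := IH2 _ lf2 w2 m_ge0 s.
  by exists (mixw (sval (p s)) d1 d2); exact: resolves_pchoice.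
Qed.

End Resolution.

Section LeastFixpoint.
Variable R : realType.
Implicit Types (Phi : Exp R -> Exp R) (g : Exp R).

Lemma lfp_ge0 Phi t : 0 <= lfp Phi t.
Proof. by apply/ereal_infP => _ [g [g_ge0 _] <-]. Qed.

Lemma lfp_ge Phi x t :
  (forall g, (forall u, 0 <= g u) -> (forall u, Phi g u <= g u) -> x <= g t) ->
  x <= lfp Phi t.
Proof. by move=> x_le; apply/ereal_infP => _ [g [g_ge0 g_pre] <-]; exact: x_le. Qed.

Lemma lfp_prefixpoint Phi :
  (forall g1 g2, (forall t, 0 <= g1 t) -> (forall t, g1 t <= g2 t) ->
     forall t, Phi g1 t <= Phi g2 t) ->
  forall t, Phi (lfp Phi) t <= lfp Phi t.
Proof.
move=> Phi_mono t; apply: lfp_ge => g g_ge0 g_pre; apply: le_trans (g_pre t).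
apply: Phi_mono => [u|u]; first exact: lfp_ge0.
by apply: ge_ereal_inf; exists (g u) => //; exists g.
Qed.

End LeastFixpoint.

Section OptionalStopping.
Variables (R : realType) (phi : pred_) (Cb : prog R) (I f : Exp R).
Variable d : pstate -> seq (R * pstate).
Hypotheses (Cb_loopfree : loopfree Cb) (d_resolves : forall s, resolves Cb s I (d s)).
Hypotheses (I_ge0 : forall s, 0 <= I s) (I_fin : forall s, I s < +oo).
Variable b : R.
Hypothesis I_increment : forall s, iv R (phi s) * awp Cb (fun t => `|I t - I s|) s <= b%:E.
Hypothesis Cb_dPAST : dPAST (While phi Cb I).
Local Notation P := (kmean (fun s => if phi s then d s else [::])).
Local Notation Ir s := (fine (I s)).

Lemma guarded_subdist s : subdist (if phi s then d s else [::]).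
Proof. by case: (phi s); [case: (d_resolves s) | rewrite /subdist big_nil ler01]. Qed.

Lemma I_EFin s : I s = (Ir s)%:E.
Proof. by rewrite fineK // ge0_fin_numE. Qed.

Lemma kmean_guarded (h : pstate -> R) s :
  (P h s)%:E = iv R (phi s) * wsum (d s) (fun t => (h t)%:E).
Proof. by rewrite /kmean; case: (phi s); rewrite ?mul1e ?wsum_EFin ?big_nil ?mul0e. Qed.

Lemma kmean_le_awp (h : pstate -> R) s : (forall t, 0 <= h t)%R ->
  (P h s)%:E <= iv R (phi s) * awp Cb (fun t => (h t)%:E) s.
Proof.
move=> h_ge0; rewrite kmean_guarded; apply: lee_wpmul2l; first exact: iv_ge0.
by case: (d_resolves s) => _ _; apply => t; rewrite lee_fin.
Qed.

Lemma kmean_increment_le s : (P (fun t => `|Ir t - Ir s|) s <= b)%R.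
Proof.
rewrite -lee_fin; apply: le_trans (kmean_le_awp s (fun t => normr_ge0 _)) _.
by under eq_fun do rewrite -abse_EFin EFinB -!I_EFin; exact: I_increment.
Qed.

Local Notation Er s := (fine (ert (While phi Cb I) (fun _ => 0) s)).

Lemma runtime_EFin s : ert (While phi Cb I) (fun _ => 0) s = (Er s)%:E.
Proof. by rewrite fineK // ge0_fin_numE ?lfp_ge0 ?Cb_dPAST. Qed.

Lemma runtime_ge0 s : (0 <= Er s)%R.
Proof. by rewrite -lee_fin -runtime_EFin lfp_ge0. Qed.

Lemma runtime_super s : (1 + P (fun t => Er t) s <= Er s)%R.
Proof.
set E := ert (While phi Cb I) (fun _ => 0).
have E_pre : 1 + (iv R (~~ phi s) * 0 + iv R (phi s) * ert Cb E s) <= E s.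
  apply: (@lfp_prefixpoint _
    (fun g s => 1 + (iv R (~~ phi s) * 0 + iv R (phi s) * ert Cb g s))) => g1 g2 g1_ge0 g12 t.
  apply: leeD2l; apply: leeD2l.
  by apply: lee_wpmul2l; [exact: iv_ge0 | exact: le_ert].
rewrite mule0 add0e in E_pre.
rewrite -lee_fin EFinD -runtime_EFin; apply: le_trans E_pre; apply: leeD2l.
apply: le_trans (kmean_le_awp s runtime_ge0) _; apply: lee_wpmul2l; first exact: iv_ge0.
under eq_fun do rewrite -runtime_EFin.
by apply: awp_le_ert => // t; exact: lfp_ge0.
Qed.

Variable g : Exp R.
Hypotheses (g_ge0 : forall s, 0 <= g s)
  (g_pre : forall s, iv R (~~ phi s) * f s + iv R (phi s) * awp Cb g s <= g s).
Hypotheses (I_sub : forall s, I s <= iv R (phi s) * awp Cb I s + iv R (~~ phi s) * f s)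
  (I_exit : forall s, ~~ phi s -> I s = f s).
(* [mine] keeps the deficit finite where [g] is [+oo]. *)
Local Notation gI s := (fine (mine (g s) (I s))).
Local Notation m s := (Ir s - gI s)%R.

Lemma min_EFin s : mine (g s) (I s) = (gI s)%:E.
Proof.
rewrite fineK // ge0_fin_numE; last by rewrite le_min g_ge0 I_ge0.
by apply: le_lt_trans (I_fin s); rewrite ge_min lexx orbT.
Qed.

Lemma deficit_ge0 s : (0 <= m s)%R.
Proof. by rewrite subr_ge0 -lee_fin -min_EFin -I_EFin ge_min lexx orbT. Qed.

Lemma deficit_le s : (m s <= Ir s)%R.
Proof. by rewrite gerBl -lee_fin -min_EFin le_min g_ge0 I_ge0. Qed.

Lemma deficit_subharmonic s : (m s <= P (fun t => m t) s)%R.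
Proof.
rewrite lerBlDl -lee_fin EFinD -min_EFin -I_EFin.
have Pm_ge0 : 0 <= (P (fun t => m t) s)%:E.
  by rewrite lee_fin; apply: (kmean_ge0 guarded_subdist) => t; exact: deficit_ge0.
have [g_le|I_lt] := leP (g s) (I s); last by rewrite leeDl.
have [ps|nps] := boolP (phi s); last first.
  rewrite lee_paddr // I_exit //; have := g_pre s.
  by rewrite nps (negbTE nps) mul1e mul0e adde0.
case: (d_resolves s) => dd d_eq d_le.
have := I_sub s; rewrite ps mul1e mul0e adde0 -d_eq => /le_trans; apply.
have -> : wsum (d s) I = wsum (d s) (fun t => mine (g t) (I t)) + (P (fun t => m t) s)%:E.
  rewrite kmean_guarded ps mul1e -wsumD => [|t|t]; last by rewrite lee_fin deficit_ge0.
    by congr wsum; apply/funext => t; rewrite min_EFin -EFinD subrKC -I_EFin.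
  by rewrite le_min g_ge0 I_ge0.
apply: leeD2r; apply: le_trans (_ : wsum (d s) g <= _).
  by apply: le_wsum => // t; rewrite ge_min lexx.
apply: le_trans (d_le _ g_ge0) _.
by have := g_pre s; rewrite ps mul1e mul0e add0e.
Qed.

Lemma I_le_prefixpoint s : I s <= g s.
Proof.
have := subharmonic_le0 guarded_subdist kmean_increment_le runtime_ge0 runtime_super
  deficit_subharmonic deficit_le s.
by rewrite subr_le0 -lee_fin -min_EFin -I_EFin le_min => /andP[].
Qed.

End OptionalStopping.

Theorem theorem6p10 (R : realType) (phi : pred_) (Cb : prog R) (I f : Exp R) :
  loopfree Cb ->
  wf (While phi Cb I) ->
  (forall s, 0 <= f s) ->
  (forall s, I s <= iv R (phi s) * awp Cb I s + iv R (~~ phi s) * f s) ->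
  dPAST (While phi Cb I) ->
  suitable phi Cb I f ->
  forall s, I s <= awp (While phi Cb I) f s.
Proof.
(* Of [suitable] only the exit value and finiteness of [I] and the bound on its
   increments are used. *)
move=> Cb_lf [I_ge0 Cb_wf] _ I_sub Cb_dPAST [[I' [_ I_dec]] [_ [I_fin _]] [b [_ I_incr]]] s.
have [d d_res] := choice (awp_resolution Cb_lf Cb_wf I_ge0).
have I_exit t : ~~ phi t -> I t = f t.
  by move/negbTE => nt; rewrite I_dec nt mul0e add0e mul1e.
apply: lfp_ge => g g_ge0 g_pre.
exact: (I_le_prefixpoint Cb_lf d_res I_ge0 I_fin I_incr Cb_dPAST g_ge0 g_pre I_sub I_exit).
Qed.
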